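(* Let $\mathcal{H}=(V,E)$ be a hypergraph with connected components $\mathcal{H}_1=(V_1,E_1),\dots,\mathcal{H}_t=(V_t,E_t)$. Then $\kappa(\mathcal{H})=\sum_{i=1}^t\kappa(\mathcal{H}_i)$.
   Context: For $S\subseteq V$, $\mathcal{H}[S]$ is the hypergraph with vertex set $S$ and edge set $\{S\cap e : e\in E,\ S\cap e\neq\emptyset\}$. The reduced hypergraph $\mathsf{red}(\mathcal{H})$ has the same vertex set and is obtained by removing every edge $e$ for which there is another edge $e'\neq e$ with $e\subseteq e'$. $\tau^*(\mathcal{H})$ denotes the value of a maximum fractional edge packing of $\mathcal{H}$ (equivalently, of a minimum fractional vertex cover). The reduced quasi vertex-cover is $\kappa(\mathcal{H})=\max_{S\subseteq V}\tau^*(\mathsf{red}(\mathcal{H}[S]))$. *)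

From HB Require Import structures.
From mathcomp Require Import all_boot all_order all_algebra.
From mathcomp Require Import classical_sets reals.
Set Implicit Arguments. Unset Strict Implicit. Unset Printing Implicit Defensive.
Import Order.TTheory GRing.Theory Num.Theory.
Local Open Scope ring_scope.


(* A hypergraph on a finite ground type T is a pair (V, E) with
   V : {set T} and E : {set {set T}}; well-formedness (edges are nonempty
   subsets of V) is stated as a hypothesis. *)
Definition hypergraph_wf (T : finType) (V : {set T}) (E : {set {set T}}) : Prop :=
  forall e, e \in E -> (e \subset V) /\ e != finset.set0.

Definition induced_edges (T : finType) (E : {set {set T}}) (S : {set T})
  : {set {set T}} :=
  [set S :&: e | e in E & S :&: e != finset.set0].

Definition red_edges (T : finType) (E : {set {set T}}) : {set {set T}} :=
  [set e in E | ~~ [exists e' in E, (e' != e) && (e \subset e')]].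

Definition frac_edge_packing (R : realType) (T : finType) (V : {set T})
  (E : {set {set T}}) (y : {set T} -> R) : Prop :=
  (forall e, e \in E -> 0 <= y e) /\
  (forall v, v \in V -> \sum_(e in E | v \in e) y e <= 1).

Definition tau_star (R : realType) (T : finType) (V : {set T})
  (E : {set {set T}}) : R :=
  sup [set \sum_(e in E) y e | y in frac_edge_packing V E]%classic.

Definition kappa (R : realType) (T : finType) (V : {set T})
  (E : {set {set T}}) : R :=
  \big[Num.max/0]_(S : {set T} | S \subset V)
     tau_star R S (red_edges (induced_edges E S)).

Definition hadj (T : finType) (E : {set {set T}}) : rel T :=
  fun u v => [exists e in E, (u \in e) && (v \in e)].

Definition hcomp (T : finType) (V : {set T}) (E : {set {set T}}) (v : T)
  : {set T} :=
  [set u in V | connect (hadj E) v u].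

Definition hcomponents (T : finType) (V : {set T}) (E : {set {set T}})
  : {set {set T}} :=
  [set hcomp V E v | v in V].

Definition comp_edges (T : finType) (E : {set {set T}}) (C : {set T})
  : {set {set T}} :=
  [set e in E | e \subset C].

(* An edge of red(H[S]) is a trace S :&: e of an edge e of H, hence lies in a
   single connected component C, and a nonempty subset of C is contained only in
   edges inside C.  So red(H[S]) is the disjoint union over the components C of
   red(H_C[S :&: C]).  Fractional packings of a disjoint union are exactly
   families of packings of the parts, so tau^* is additive over components, and
   maximizing over S \subset V splits into independent maximizations over the
   S :&: C \subset C. *)

From mathcomp Require Import boolp classical_sets reals.
From mathcomp Require Import all_boot all_order all_algebra.
Import Order.TTheory GRing.Theory Num.Theory.
Local Open Scope ring_scope.

Set Implicit Arguments. Unset Strict Implicit. Unset Printing Implicit Defensive.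

Section FractionalPackings.
Variables (R : realType) (T : finType).
Implicit Types (W : {set T}) (F : {set {set T}}) (y : {set T} -> R).

Definition packing_values W F : set R :=
  [set \sum_(e in F) y e | y in frac_edge_packing W F]%classic.

Lemma packing0 W F : frac_edge_packing W F (fun=> 0 : R).
Proof. by split=> // v _; rewrite big1. Qed.

Lemma packing_le1 W F y :
  hypergraph_wf W F -> frac_edge_packing W F y -> {in F, forall f, y f <= 1}.
Proof.
move=> wfF [y_ge0 y_le1] f fF; have [fW /set0Pn[v vf]] := wfF f fF.
apply: le_trans (y_le1 v (subsetP fW v vf)).
rewrite (bigD1 f) /=; last by rewrite fF vf.
by rewrite lerDl sumr_ge0 // => e /andP[/andP[eF _] _]; apply: y_ge0.
Qed.

Lemma packing_values_nonempty W F : exists r, packing_values W F r.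
Proof. by exists 0, (fun=> 0 : R); [exact: packing0 | rewrite big1]. Qed.

Lemma has_sup_packing_values W F :
  hypergraph_wf W F -> has_sup (packing_values W F).
Proof.
move=> wfF; split; first exact: packing_values_nonempty.
exists #|F|%:R => _ [y yF <-]; rewrite -sumr_const.
by apply: ler_sum => f fF; apply: packing_le1 yF f fF.
Qed.

Lemma le_tau_star W F y : hypergraph_wf W F -> frac_edge_packing W F y ->
  \sum_(e in F) y e <= tau_star R W F.
Proof.
move=> wfF yF; apply: (sup_upper_bound (has_sup_packing_values wfF)).
by exists y.
Qed.

Lemma ge_tau_star W F x :
  (forall y, frac_edge_packing W F y -> \sum_(e in F) y e <= x) ->
  tau_star R W F <= x.
Proof.
move=> ub; apply: ge_sup; first exact: packing_values_nonempty.
by move=> _ [y yF <-]; apply: ub.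
Qed.

Lemma tau_star_ge0 W F : hypergraph_wf W F -> 0 <= tau_star R W F.
Proof.
move=> wfF; have := le_tau_star wfF (packing0 W F).
by rewrite big1.
Qed.

Lemma tau_star_adherent W F eps : hypergraph_wf W F -> 0 < eps ->
  exists2 y, frac_edge_packing W F y & tau_star R W F - eps < \sum_(e in F) y e.
Proof.
move=> wfF eps_gt0.
by have [_ [y yF <-]] := sup_adherent eps_gt0 (has_sup_packing_values wfF); exists y.
Qed.

End FractionalPackings.

Section ClosedVertexSets.
Variable T : finType.
Implicit Types (S C : {set T}) (E F : {set {set T}}).

Definition edge_closed F C :=
  forall f x, f \in F -> x \in f -> x \in C -> f \subset C.

Lemma edge_closedS F F' C :
  F' \subset F -> edge_closed F C -> edge_closed F' C.
Proof. by move=> /subsetP sF'F closedC f x /sF'F; apply: closedC. Qed.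

Lemma red_edges_sub F : red_edges F \subset F.
Proof. by apply/subsetP => f; rewrite inE => /andP[]. Qed.

Lemma induced_edges_wf E S : hypergraph_wf S (induced_edges E S).
Proof. by move=> _ /imsetP[e /setIdP[_ Se_n0] ->]; rewrite subsetIl. Qed.

Lemma red_induced_wf E S : hypergraph_wf S (red_edges (induced_edges E S)).
Proof. by move=> f /(subsetP (red_edges_sub _)); apply: induced_edges_wf. Qed.

Lemma edge_closed_induced E S C :
  edge_closed E C -> edge_closed (induced_edges E S) C.
Proof.
move=> closedC _ x /imsetP[e /setIdP[eE _] ->] /setIP[_ xe] xC.
exact: subset_trans (subsetIr S e) (closedC e x eE xe xC).
Qed.

Lemma induced_comp_edges E S C : edge_closed E C ->
  induced_edges (comp_edges E C) (S :&: C) = comp_edges (induced_edges E S) C.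
Proof.
move=> closedC.
have SCe (e : {set T}) : e \subset C -> S :&: C :&: e = S :&: e.
  by move=> eC; rewrite -setIA (setIidPr eC).
apply/setP => f; rewrite inE; apply/imsetP/andP.
  case=> e /setIdP[/setIdP[eE eC] Se_n0] ->; rewrite SCe // in Se_n0 *.
  by split; [apply: imset_f; rewrite inE eE | exact: subset_trans (subsetIr _ _) eC].
case=> /imsetP[e /setIdP[eE /set0Pn[x /setIP[xS xe]]] ->] SeC.
have eC : e \subset C.
  by apply: (closedC e x eE xe); apply: (subsetP SeC); rewrite inE xS.
exists e; last by rewrite SCe.
by rewrite !inE eE eC SCe //=; apply/set0Pn; exists x; rewrite inE xS.
Qed.

Lemma red_comp_edges F C : set0 \notin F -> edge_closed F C ->
  red_edges (comp_edges F C) = comp_edges (red_edges F) C.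
Proof.
move=> F_n0 closedC; apply/setP => f; rewrite !inE andbAC.
case fC: (f \subset C); rewrite ?andbF ?andbT //.
case fF: (f \in F) => //=; congr (~~ _).
apply: eq_existsb => e; rewrite inE andbCA; case eF: (e \in F); rewrite ?andbF //=.
case fe: (f \subset e); rewrite ?andbF //= andbT.
have /set0Pn[x xf] : f != set0 by apply: contraNneq F_n0 => <-.
by rewrite (closedC e x eF (subsetP fe x xf) (subsetP fC x xf)) andbT.
Qed.

Lemma comp_edges_red_induced E S C : edge_closed E C ->
  comp_edges (red_edges (induced_edges E S)) C =
  red_edges (induced_edges (comp_edges E C) (S :&: C)).
Proof.
move=> closedC; rewrite induced_comp_edges // red_comp_edges //.
  by apply/negP => /induced_edges_wf[_ /eqP].
exact: edge_closed_induced.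
Qed.

End ClosedVertexSets.

(* [hypergraph_wf] unfolds to a product, so [Set Implicit Arguments] would
   otherwise make the vertex and edge sets implicit. *)
Arguments red_induced_wf {T} E S.

Section BlockDecomposition.
Variables (R : realType) (T : finType) (W : {set T}) (F P : {set {set T}}).
Hypotheses (wfF : hypergraph_wf W F) (trivP : trivIset P).
Hypotheses (coverP : W \subset cover P) (closedP : {in P, forall C, edge_closed F C}).
Implicit Types (C : {set T}) (f : {set T}) (y : {set T} -> R).

Lemma edge_in_block f : f \in F -> exists2 C, C \in P & f \subset C.
Proof.
move=> fF; have [fW /set0Pn[x xf]] := wfF fF.
have xP : x \in cover P by apply: (subsetP coverP); apply: (subsetP fW).
exists (pblock P x); first exact: pblock_mem.
have xPx : x \in pblock P x by rewrite mem_pblock.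
exact: (closedP (pblock_mem xP) fF xf xPx).
Qed.

Lemma edge_block_unique f C0 : f \in F -> C0 \in P -> f \subset C0 ->
  forall C, (C \in P) && (f \subset C) = (C == C0).
Proof.
move=> fF C0P fC0 C; have [_ /set0Pn[x xf]] := wfF fF.
apply/andP/eqP => [[CP fC] | ->//].
have [xC xC0] := (subsetP fC x xf, subsetP fC0 x xf).
by rewrite -(def_pblock trivP CP xC) (def_pblock trivP C0P xC0).
Qed.

Lemma sum_edges_blocks y :
  \sum_(f in F) y f = \sum_(C in P) \sum_(f in comp_edges F C) y f.
Proof.
have sum_edge f : f \in F -> y f = \sum_(C in P | f \subset C) y f.
  move=> fF; have [C0 C0P fC0] := edge_in_block fF.
  by rewrite (big_pred1 C0) // => C; apply: edge_block_unique.
rewrite (eq_bigr _ sum_edge) (exchange_big_dep (mem P)) /=; last first.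
  by move=> f C _ /andP[].
by apply: eq_bigr => C CP; apply: eq_bigl => f; rewrite !inE CP.
Qed.

Lemma comp_edges_wf C : hypergraph_wf (W :&: C) (comp_edges F C).
Proof.
move=> f /setIdP[fF fC]; have [fW f_n0] := wfF fF.
by rewrite subsetI fW fC.
Qed.
Arguments comp_edges_wf : clear implicits.

Lemma packing_comp_edges C y : frac_edge_packing W F y ->
  frac_edge_packing (W :&: C) (comp_edges F C) y.
Proof.
move=> [y_ge0 y_le1]; split=> [f /setIdP[fF _] | v /setIP[vW _]]; first exact: y_ge0.
apply: le_trans (y_le1 v vW); rewrite [X in _ <= X](bigID (fun f => f \subset C)) /=.
rewrite (eq_bigl (fun f => (f \in F) && (v \in f) && (f \subset C))) => [|f].
  by rewrite lerDl sumr_ge0 // => f /andP[/andP[fF _] _]; apply: y_ge0.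
by rewrite inE andbAC.
Qed.

Definition glue_packings (Y : {set T} -> {set T} -> R) f : R :=
  \sum_(C in P | f \subset C) Y C f.

Lemma glue_packings_block Y C f :
  C \in P -> f \in comp_edges F C -> glue_packings Y f = Y C f.
Proof.
move=> CP /setIdP[fF fC]; rewrite /glue_packings (big_pred1 C) // => C'.
exact: edge_block_unique.
Qed.

Lemma glue_packingsP Y :
  (forall C, C \in P -> frac_edge_packing (W :&: C) (comp_edges F C) (Y C)) ->
  frac_edge_packing W F (glue_packings Y).
Proof.
move=> YP; split=> [f fF | v vW].
  by apply: sumr_ge0 => C /andP[CP fC]; apply: (YP C CP).1; rewrite inE fF fC.
have vP : v \in cover P by apply: (subsetP coverP).
have CP := pblock_mem vP; have vC : v \in pblock P v by rewrite mem_pblock.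
have closed_e e : e \in F -> v \in e -> e \subset pblock P v.
  by move=> eF ve; apply: (closedP CP eF ve vC).
rewrite (eq_big (fun e => (e \in comp_edges F (pblock P v)) && (v \in e))
                (Y (pblock P v))).
- by apply: (YP _ CP).2; rewrite inE vW vC.
- move=> e; rewrite inE andbAC.
  by case: (boolP ((e \in F) && (v \in e))) => //= /andP[eF ve]; rewrite closed_e.
- move=> e /andP[eF ve]; apply: glue_packings_block => //.
  by rewrite inE eF closed_e.
Qed.

Lemma sum_glue_packings Y :
  \sum_(f in F) glue_packings Y f = \sum_(C in P) \sum_(f in comp_edges F C) Y C f.
Proof.
rewrite sum_edges_blocks; apply: eq_bigr => C CP; apply: eq_bigr => f fC.
exact: glue_packings_block.
Qed.

Lemma tau_star_le_sum_blocks :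
  tau_star R W F <= \sum_(C in P) tau_star R (W :&: C) (comp_edges F C).
Proof.
apply: ge_tau_star => y yF; rewrite sum_edges_blocks; apply: ler_sum => C _.
exact: le_tau_star (comp_edges_wf C) (packing_comp_edges C yF).
Qed.

(* tau^* is a supremum, so the blocks are glued from eps-optimal packings. *)
Lemma sum_blocks_le_tau_star eps : 0 < eps ->
  \sum_(C in P) tau_star R (W :&: C) (comp_edges F C) <=
  tau_star R W F + eps *+ #|P|.
Proof.
move=> eps_gt0.
have /choice[Y YP] C : exists Y, frac_edge_packing (W :&: C) (comp_edges F C) Y /\
    tau_star R (W :&: C) (comp_edges F C) - eps < \sum_(f in comp_edges F C) Y f.
  by have [Y ? ?] := tau_star_adherent (comp_edges_wf C) eps_gt0; exists Y.
have glue_le := le_tau_star wfF (glue_packingsP (fun C _ => (YP C).1)).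
rewrite sum_glue_packings in glue_le; apply: le_trans (lerD glue_le (lexx _)).
rewrite -sumr_const -big_split /=; apply: ler_sum => C _.
by rewrite -lerBlDr; apply: ltW (YP C).2.
Qed.

Lemma tau_star_sum_blocks :
  tau_star R W F = \sum_(C in P) tau_star R (W :&: C) (comp_edges F C).
Proof.
apply/le_anti; rewrite tau_star_le_sum_blocks /=; apply/ler_addgt0Pr => e e_gt0.
have k_gt0 : 0 < (#|P|.+1)%:R :> R by rewrite ltr0n.
apply: le_trans (sum_blocks_le_tau_star (divr_gt0 e_gt0 k_gt0)) _.
rewrite lerD2l -[X in X <= _]mulr_natr mulrAC ler_pdivrMr //.
by rewrite ler_pM2l // ler_nat.
Qed.

End BlockDecomposition.

Lemma bigcup_setI_trivIset (T : finType) (P : {set {set T}})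
    (A : {set T} -> {set T}) C :
  trivIset P -> (forall D, D \in P -> A D \subset D) -> C \in P ->
  (\bigcup_(D in P) A D) :&: C = A C.
Proof.
move=> trivP AP CP; apply/setP => x; rewrite inE.
apply/andP/idP => [[/bigcupP[D DP xAD] xC] | xAC].
  have xD := subsetP (AP D DP) x xAD.
  by rewrite -(def_pblock trivP CP xC) (def_pblock trivP DP xD).
by split; [apply/bigcupP; exists C | apply: (subsetP (AP C CP))].
Qed.

Section Components.
Variables (T : finType) (V : {set T}) (E : {set {set T}}).

Lemma hadj_sym : symmetric (hadj E).
Proof. by move=> u v; apply: eq_existsb => e; rewrite [(u \in e) && _]andbC. Qed.

Lemma hcomponents_partition : partition (hcomponents V E) V.
Proof.
apply: (@equivalence_partitionP _ (connect (hadj E))) => x y z _ _ _.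
split; first exact: connect0.
by move=> xy; apply: (same_connect (sym_connect_sym hadj_sym) xy z).
Qed.

Lemma edge_closed_hcomponent C : hypergraph_wf V E ->
  C \in hcomponents V E -> edge_closed E C.
Proof.
move=> wfE /imsetP[v _ ->] e x eE xe /setIdP[_ vx].
apply/subsetP => u ue; rewrite inE (subsetP (wfE e eE).1 u ue) /=.
by apply: connect_trans vx (connect1 _); apply/existsP; exists e; rewrite eE xe ue.
Qed.

End Components.

Section Kappa.
Variables (R : realType) (T : finType).
Implicit Types (W S : {set T}) (G : {set {set T}}).

Lemma kappa_ge0 W G : 0 <= kappa R W G.
Proof. exact: bigmax_ge_id. Qed.

Lemma le_kappa W G S : S \subset W ->
  tau_star R S (red_edges (induced_edges G S)) <= kappa R W G.
Proof. exact: (le_bigmax_cond _ (P := fun S => S \subset W)). Qed.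

Lemma kappa_attained W G : exists2 S : {set T}, S \subset W &
  kappa R W G = tau_star R S (red_edges (induced_edges G S)).
Proof.
rewrite /kappa.
have [S SW ->] := eq_bigmax set0 (fun S => S \subset W) _ (sub0set W)
  (fun S _ => tau_star_ge0 R (red_induced_wf G S)).
by exists S.
Qed.

Lemma tau_red_induced_sum_hcomponents V E S :
  hypergraph_wf V E -> S \subset V ->
  tau_star R S (red_edges (induced_edges E S)) =
  \sum_(C in hcomponents V E)
     tau_star R (S :&: C) (red_edges (induced_edges (comp_edges E C) (S :&: C))).
Proof.
move=> wfE SV; have [/eqP coverV trivP _] := and3P (hcomponents_partition V E).
have closedE C : C \in hcomponents V E -> edge_closed E C.
  exact: edge_closed_hcomponent.
rewrite (tau_star_sum_blocks R (red_induced_wf E S) trivP); first last.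
- move=> C /closedE closedC; apply: edge_closedS (red_edges_sub _) _.
  exact: edge_closed_induced.
- by rewrite coverV.
by apply: eq_bigr => C /closedE closedC; rewrite comp_edges_red_induced.
Qed.

End Kappa.

Theorem lemma3p5 (R : realType) (T : finType) (V : {set T})
  (E : {set {set T}}) (wf : hypergraph_wf V E) :
  kappa R V E =
  \sum_(C in hcomponents V E) kappa R C (comp_edges E C).
Proof.
have [/eqP coverV trivP _] := and3P (hcomponents_partition V E).
apply/le_anti/andP; split.
  rewrite [X in X <= _]/kappa; apply: bigmax_le => [|S SV].
    by apply: sumr_ge0 => C _; apply: kappa_ge0.
  rewrite (tau_red_induced_sum_hcomponents R wf SV); apply: ler_sum => C _.
  by apply: le_kappa; apply: subsetIr.
have [Sf SfC kappaE] :=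
  fin_all_exists2 (fun C => kappa_attained R C (comp_edges E C)).
pose S := \bigcup_(C in hcomponents V E) Sf C.
have SV : S \subset V.
  by apply/bigcupsP => C CP; rewrite -coverV (subset_trans (SfC C)) ?bigcup_sup.
apply: le_trans (le_kappa R E SV).
rewrite (tau_red_induced_sum_hcomponents R wf SV).
apply: ler_sum => C CP.
by rewrite bigcup_setI_trivIset ?kappaE // => D _; apply: SfC.
Qed.
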